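(* Let $\mathbb{F}$ be a finite field of odd characteristic, $V=\mathbb{F}^d$ with $d>2$, $U$ an $r$-dimensional subspace with $0<r<d$, and $H=\mathrm{GL}(V)_U$. Then $A^2V$ is a uniserial $H$-module whose only $H$-submodules are $\{0\}, A^2U, U\wedge V, A^2V$, where $U\wedge V=\langle u\wedge v\mid u\in U, v\in V\rangle$; the successive factors satisfy $A^2V/(U\wedge V)\cong A^2(V/U)$, $(U\wedge V)/A^2U\cong U\otimes (V/U)$, and they have dimensions $\binom{d-r}2$, $r(d-r)$, $\binom r2$ respectively.
   Context: $A^2V$ is the exterior square of $V$, with $H$ acting diagonally, and $A^2U$ is identified with its image in $A^2V$. *)

From HB Require Import structures.
From mathcomp Require Import all_boot all_order all_algebra all_fingroup all_field.
Set Implicit Arguments. Unset Strict Implicit. Unset Printing Implicit Defensive.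
Import GRing.Theory.
Local Open Scope ring_scope.

(* V = F^d as row vectors 'rV[F]_d; GL(V) acts on the right: v |-> v *m g.
   Exterior square A^2 V is modelled as the space of d x d matrices, with
   u /\ v := u^T v - v^T u  (the standard embedding of A^2 V as alternating
   matrices); the diagonal action (u g) /\ (v g) is then M |-> g^T M g. *)
Definition wedge (F : fieldType) (d : nat) (u v : 'rV[F]_d) : 'M[F]_d :=
  u^T *m v - v^T *m u.

(* S /\ T := < u /\ v | u in S, v in T >  (so A^2 U = wedge2 U U,
   U /\ V = wedge2 U fullv, A^2 V = wedge2 fullv fullv). *)
Definition wedge2 (F : finFieldType) (d : nat) (S T : {vspace 'rV[F]_d})
  : {vspace 'M[F]_d} :=
  <<[seq wedge x.1 x.2 |
     x <- enum [pred x : 'rV[F]_d * 'rV[F]_d | (x.1 \in S) && (x.2 \in T)]]>>%VS.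

(* S (x) T, modelled inside F^d (x) F^e = 'M_(d,e) via u (x) w := u^T w. *)
Definition tensor2 (F : finFieldType) (d e : nat) (S : {vspace 'rV[F]_d})
  (T : {vspace 'rV[F]_e}) : {vspace 'M[F]_(d, e)} :=
  <<[seq x.1^T *m x.2 |
     x <- enum [pred x : 'rV[F]_d * 'rV[F]_e | (x.1 \in S) && (x.2 \in T)]]>>%VS.

Definition inH (F : fieldType) (d : nat) (U : {vspace 'rV[F]_d}) (g : 'M[F]_d) : Prop :=
  g \in unitmx /\ forall u, u \in U -> u *m g \in U.

Definition Hinvariant (F : fieldType) (d : nat) (U : {vspace 'rV[F]_d})
  (W : {vspace 'M[F]_d}) : Prop :=
  forall g, inH U g -> forall M, M \in W -> g^T *m M *m g \in W.

From HB Require Import structures.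
From mathcomp Require Import all_boot all_order all_algebra all_fingroup all_field.
From mathcomp Require Import zify.
Set Implicit Arguments. Unset Strict Implicit. Unset Printing Implicit Defensive.
Import GRing.Theory.
Local Open Scope ring_scope.

(* Work in a basis of V whose first r vectors span U; call a basis vector deep
   when it lies outside U. An element of A^2 V is then an alternating matrix,
   and H contains every invertible lower block triangular matrix, in particular
   the sign changes diag(+-1) and the transvections e_i |-> e_i + e_l with e_l
   no deeper than e_i. Averaging an element of an H-submodule W with its
   conjugates by sign changes (2 is invertible) isolates single coordinates, so
   W contains e_i /\ e_j as soon as one of its elements has a nonzero (i, j)
   coordinate; transvections then produce every e_k /\ e_l with no more deep
   indices than (i, j). Hence W is spanned by the e_k /\ e_l whose depth is at
   most the largest depth W meets, and depths 0, 1, 2 give A^2 U, U /\ V, A^2 V.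
   The quotient maps and the dimensions are read off in the same coordinates;
   dim A^2 F^n = C(n, 2) follows by induction on n from the hyperplane case. *)

Section Wedge.
Variable F : fieldType.

Lemma wedgeC n (u v : 'rV[F]_n) : wedge v u = - wedge u v.
Proof. by rewrite /wedge opprB. Qed.

Lemma tr_wedge n (u v : 'rV[F]_n) : (wedge u v)^T = - wedge u v.
Proof. by rewrite /wedge linearB /= !trmx_mul !trmxK opprB. Qed.

Lemma wedge_mulmx n m (A : 'M[F]_(n, m)) (u v : 'rV[F]_n) :
  wedge (u *m A) (v *m A) = A^T *m wedge u v *m A.
Proof. by rewrite /wedge mulmxBr mulmxBl !trmx_mul !mulmxA. Qed.

Lemma wedgeDl n (u u' v : 'rV[F]_n) : wedge (u + u') v = wedge u v + wedge u' v.
Proof. by rewrite /wedge linearD /= mulmxDl mulmxDr opprD addrACA. Qed.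

Lemma wedge_coef n (u v : 'rV[F]_n) i j : wedge u v i j = u 0 i * v 0 j - v 0 i * u 0 j.
Proof. by rewrite /wedge !mxE !big_ord1 !mxE. Qed.

Definition ewedge n (i j : 'I_n) : 'M[F]_n := wedge (delta_mx 0 i) (delta_mx 0 j).

Lemma ewedgeE n (i j : 'I_n) : ewedge i j = delta_mx i j - delta_mx j i.
Proof. by rewrite /ewedge /wedge !trmx_delta !mul_delta_mx. Qed.

Lemma ewedgeC n (i j : 'I_n) : ewedge j i = - ewedge i j.
Proof. exact: wedgeC. Qed.

Lemma ewedge_mulmx n m (B : 'M[F]_(n, m)) i j :
  B^T *m ewedge i j *m B = wedge (row i B) (row j B).
Proof. by rewrite -wedge_mulmx -!rowE. Qed.

Lemma tr_skew_mulmx n m (A : 'M[F]_(n, m)) (M : 'M[F]_n) :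
  M^T = - M -> (A^T *m M *m A)^T = - (A^T *m M *m A).
Proof. by move=> skM; rewrite !trmx_mul trmxK skM mulNmx mulmxN mulmxA. Qed.

Lemma skew_coef n (M : 'M[F]_n) i j : M^T = - M -> M i j = - M j i.
Proof. by move=> /matrixP /(_ j i); rewrite !mxE. Qed.

Section CharNot2.
Hypothesis two_neq0 : (2%:R : F) != 0.

Lemma skew_diag n (M : 'M[F]_n) i : M^T = - M -> M i i = 0.
Proof.
move=> /matrixP /(_ i i); rewrite !mxE => /eqP; rewrite -addr_eq0 -mulr2n.
by rewrite -mulr_natr mulf_eq0 (negPf two_neq0) orbF => /eqP.
Qed.

Lemma skew_sum_ewedge n (M : 'M[F]_n) : M^T = - M ->
  M = 2%:R^-1 *: \sum_i \sum_j M i j *: ewedge i j.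
Proof.
move=> skM; suff -> : \sum_i \sum_j M i j *: ewedge i j = 2%:R *: M.
  by rewrite scalerA mulVf // scale1r.
have sum_trE : \sum_i \sum_j M i j *: delta_mx j i = M^T.
  rewrite [RHS]matrix_sum_delta exchange_big /=.
  by apply: eq_bigr => i _; apply: eq_bigr => j _; rewrite mxE.
under eq_bigr do under eq_bigr do rewrite ewedgeE scalerBr.
under eq_bigr do rewrite sumrB.
by rewrite sumrB -matrix_sum_delta sum_trE skM opprK scaler_nat mulr2n.
Qed.

End CharNot2.
End Wedge.

Arguments ewedge {F n} i j.

Lemma span_ind (F : fieldType) (vT : vectType F) (P : vT -> Prop) (X : seq vT) :
  P 0 -> (forall a x y, P x -> P y -> P (a *: x + y)) ->
  (forall x, x \in X -> P x) -> forall v, v \in <<X>>%VS -> P v.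
Proof.
move=> P0 PC PX v /(@coord_span _ _ _ (in_tuple X)) ->.
by elim/big_rec: _ => // i y _ Py; apply: PC => //; apply/PX/mem_nth.
Qed.

Section Wedge2.
Variable F : finFieldType.
Implicit Types n : nat.

Lemma mem_wedge2 n (S T : {vspace 'rV[F]_n}) u v :
  u \in S -> v \in T -> wedge u v \in wedge2 S T.
Proof.
move=> uS vT; apply: memv_span.
by apply/mapP; exists (u, v) => //; rewrite mem_enum; apply/andP.
Qed.

Lemma wedge2_ind n (S T : {vspace 'rV[F]_n}) (P : 'M[F]_n -> Prop) :
  P 0 -> (forall a M N, P M -> P N -> P (a *: M + N)) ->
  (forall u v, u \in S -> v \in T -> P (wedge u v)) ->
  forall M, M \in wedge2 S T -> P M.
Proof.
move=> P0 PC Pw; apply: span_ind => // M /mapP [[u v]].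
by rewrite mem_enum => /andP [uS vT] ->; apply: Pw.
Qed.

Lemma mem_tensor2 n m (S : {vspace 'rV[F]_n}) (T : {vspace 'rV[F]_m}) u v :
  u \in S -> v \in T -> u^T *m v \in tensor2 S T.
Proof.
move=> uS vT; apply: memv_span.
by apply/mapP; exists (u, v) => //; rewrite mem_enum; apply/andP.
Qed.

Lemma tensor2_ind n m (S : {vspace 'rV[F]_n}) (T : {vspace 'rV[F]_m})
    (P : 'M[F]_(n, m) -> Prop) :
  P 0 -> (forall a M N, P M -> P N -> P (a *: M + N)) ->
  (forall u v, u \in S -> v \in T -> P (u^T *m v)) ->
  forall M, M \in tensor2 S T -> P M.
Proof.
move=> P0 PC Pt; apply: span_ind => // M /mapP [[u v]].
by rewrite mem_enum => /andP [uS vT] ->; apply: Pt.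
Qed.

Lemma wedge2_skew n (S T : {vspace 'rV[F]_n}) : {in wedge2 S T, forall M, M^T = - M}.
Proof.
apply: (wedge2_ind (P := fun M => M^T = - M)) => [|a M N skM skN|u v _ _].
- by rewrite trmx0 oppr0.
- by rewrite linearD linearZ /= skM skN opprD scalerN.
- exact: tr_wedge.
Qed.

Lemma wedge2_mulmx n m (A : 'M[F]_(n, m)) (S T : {vspace 'rV[F]_n})
    (S' T' : {vspace 'rV[F]_m}) :
  {in S, forall u, u *m A \in S'} -> {in T, forall v, v *m A \in T'} ->
  {in wedge2 S T, forall M, A^T *m M *m A \in wedge2 S' T'}.
Proof.
move=> AS AT; apply: wedge2_ind => [|a M N hM hN|u v uS vT].
- by rewrite mulmx0 mul0mx mem0v.
- by rewrite mulmxDr mulmxDl -scalemxAr -scalemxAl memvD ?memvZ.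
- by rewrite -wedge_mulmx mem_wedge2 ?AS ?AT.
Qed.

Lemma wedge2S n (S T S' T' : {vspace 'rV[F]_n}) :
  (S <= S')%VS -> (T <= T')%VS -> (wedge2 S T <= wedge2 S' T')%VS.
Proof.
move=> sSS' sTT'; apply/span_subvP => M /mapP [[u v]].
by rewrite mem_enum => /andP [uS vT] ->; rewrite mem_wedge2 ?(subvP sSS') ?(subvP sTT').
Qed.

Lemma wedge2_skew_mulmx n (B : 'M[F]_n) (S T : {vspace 'rV[F]_n}) (N : 'M[F]_n) :
  (2%:R : F) != 0 -> N^T = - N ->
  (forall i j, N i j != 0 ->
     (row i B \in S /\ row j B \in T) \/ (row j B \in S /\ row i B \in T)) ->
  B^T *m N *m B \in wedge2 S T.
Proof.
move=> two_neq0 skN suppN; rewrite [N](skew_sum_ewedge two_neq0 skN).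
rewrite -scalemxAr -scalemxAl memvZ // mulmx_sumr mulmx_suml.
apply: memv_suml => i _; rewrite mulmx_sumr mulmx_suml.
apply: memv_suml => j _; rewrite -scalemxAr -scalemxAl ewedge_mulmx.
have [->|/suppN [[iS jT]|[jS iT]]] := eqVneq (N i j) 0; first by rewrite scale0r mem0v.
  by rewrite memvZ ?mem_wedge2.
by rewrite memvZ // wedgeC memvN mem_wedge2.
Qed.

Lemma mem_wedge2f n (M : 'M[F]_n) : (2%:R : F) != 0 ->
  M \in wedge2 fullv fullv <-> M^T = - M.
Proof.
move=> two_neq0; split; first exact: wedge2_skew.
move=> skM; rewrite -[M]mulmx1 -[M in M *m _]mul1mx -[X in X *m M]trmx1.
by apply: wedge2_skew_mulmx => // i j _; left; rewrite !memvf.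
Qed.

End Wedge2.

Section VbasisMx.
Variables (F : fieldType) (n : nat) (U : {vspace 'rV[F]_n}).

Definition vbasis_mx : 'M[F]_(\dim U, n) := \matrix_i (vbasis U)`_i.

Lemma vbasis_mx_mem x : x *m vbasis_mx \in U.
Proof.
rewrite mulmx_sum_row; apply: memv_suml => i _; apply: memvZ.
by rewrite rowK; apply/vbasis_mem/mem_nth; rewrite size_tuple.
Qed.

Lemma vbasis_mxP u : u \in U -> exists x, u = x *m vbasis_mx.
Proof.
rewrite -{1}(span_basis (vbasisP U)) => /coord_span ->.
exists (\row_i coord (vbasis U) i u); rewrite mulmx_sum_row.
by apply: eq_bigr => i _; rewrite rowK mxE.
Qed.

Lemma vbasis_mx_free : row_free vbasis_mx.
Proof.
apply: inj_row_free => x x0; apply/rowP => i; rewrite mxE.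
move/freeP: (basis_free (vbasisP U)) => /(_ (fun i => x 0 i)); apply.
apply: etrans x0; rewrite mulmx_sum_row; apply: eq_bigr => k _; by rewrite rowK.
Qed.

End VbasisMx.

Section AdaptedBasis.
Variables (F : finFieldType) (d : nat) (U : {vspace 'rV[F]_d}).
Local Notation r := (\dim U).

Lemma dimv_leq : (r <= d)%N.
Proof. by have := dimvS (subvf U); rewrite dimvf dim_matrix mul1r. Qed.

Definition adapted_seq := (vbasis U : seq _) ++ (vbasis U^C : seq _).
Definition adapted_basis : 'M[F]_d := \matrix_i adapted_seq`_i.
Local Notation B := adapted_basis.
Local Notation Bi := (invmx adapted_basis).

(* Row [i] of the adapted basis lies in [U] iff [~~ level i]. *)
Definition level (i : 'I_d) : bool := (r <= i)%N.

Lemma mem_span_mulmx (Y Z : seq 'rV[F]_d) v :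
  (size Y <= d)%N -> v \in <<Y>>%VS ->
  exists2 c : 'rV[F]_d, (forall j : 'I_d, (size Y <= j)%N -> c 0 j = 0)
                      & v = c *m \matrix_i (Y ++ Z)`_i.
Proof.
move=> leYd /(@coord_span _ _ _ (in_tuple Y)) ->.
exists (\sum_(i < size Y) coord (in_tuple Y) i v *: delta_mx 0 (widen_ord leYd i)).
  move=> j leYj; rewrite summxE big1 // => i _; rewrite !mxE eqxx /=.
  by case: eqP => [ij|]; [move: leYj; rewrite ij leqNgt (ltn_ord i) | rewrite mulr0].
rewrite mulmx_suml; apply: eq_bigr => i _.
by rewrite -scalemxAl -rowE rowK nth_cat /= ltn_ord.
Qed.

Lemma size_adapted_seq : size adapted_seq = d.
Proof.
rewrite size_cat !size_tuple dimv_compl dimvf dim_matrix mul1r.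
by rewrite subnKC // dimv_leq.
Qed.

Lemma adapted_basis_unit : B \in unitmx.
Proof.
have spanX : <<adapted_seq>>%VS = fullv.
  rewrite span_cat (span_basis (vbasisP U)) (span_basis (vbasisP U^C)).
  exact: addv_complf.
have coordP (i : 'I_d) : exists c : 'rV[F]_d, delta_mx 0 i == c *m B.
  have := @mem_span_mulmx adapted_seq [::] (delta_mx 0 i).
  rewrite size_adapted_seq spanX memvf cats0 => /(_ (leqnn d) isT) [c _ ->].
  by exists c.
pose C := \matrix_i xchoose (coordP i).
suff /mulmx1_unit [] : C *m B = 1%:M by [].
apply/row_matrixP => i; rewrite row_mul rowK row1.
exact/esym/eqP/(xchooseP (coordP i)).
Qed.

Lemma adapted_basisK : Bi *m B = 1%:M.
Proof. exact: mulVmx adapted_basis_unit. Qed.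

Lemma adapted_basisKV : B *m Bi = 1%:M.
Proof. exact: mulmxV adapted_basis_unit. Qed.

Lemma row_adapted_basis_U i : ~~ level i -> row i B \in U.
Proof.
rewrite -ltnNge => ltir; rewrite rowK nth_cat size_tuple ltir.
by apply/vbasis_mem/mem_nth; rewrite size_tuple.
Qed.

Lemma memU_coord v : v \in U <-> forall j, level j -> (v *m Bi) 0 j = 0.
Proof.
split=> [vU | v0].
  have leYd : (size (vbasis U) <= d)%N by rewrite size_tuple dimv_leq.
  have vY : v \in <<vbasis U>>%VS by rewrite (span_basis (vbasisP U)).
  have [c c0 ->] := mem_span_mulmx (vbasis U^C) leYd vY.
  by rewrite mulmxK ?adapted_basis_unit // => j lj; apply: c0; rewrite size_tuple.
rewrite -(mulmxKV adapted_basis_unit v) mulmx_sum_row.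
apply: memv_suml => j _; have [lj | nlj] := boolP (level j).
  by rewrite v0 // scale0r mem0v.
by rewrite memvZ // row_adapted_basis_U.
Qed.

Definition Ulevel (b : bool) : {vspace 'rV[F]_d} := if b then fullv else U.

Lemma memUlevel_coord b v :
  v \in Ulevel b <-> forall j, (b < level j)%N -> (v *m Bi) 0 j = 0.
Proof.
case: b => /=; first by rewrite memvf; split=> // _ j; rewrite ltnNge leq_b1.
by rewrite memU_coord; split=> v0 j lj; apply: v0; move: lj; rewrite /= lt0b.
Qed.

Lemma row_adapted_basis_Ulevel b i : (row i B \in Ulevel b) = (level i <= b)%N.
Proof.
apply/idP/idP => [/memUlevel_coord rowB0 | ]; last first.
  by case: b => [_|]; [exact: memvf | rewrite leqn0 eqb0; apply: row_adapted_basis_U].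
rewrite leqNgt; apply/negP => /rowB0/eqP.
by rewrite -row_mul adapted_basisKV row1 mxE !eqxx oner_eq0.
Qed.

Definition coordmx (M : 'M[F]_d) : 'M[F]_d := Bi^T *m M *m Bi.

Lemma coordmxK M : B^T *m coordmx M *m B = M.
Proof.
rewrite /coordmx !mulmxA -trmx_mul adapted_basisK trmx1 mul1mx.
by rewrite -mulmxA adapted_basisK mulmx1.
Qed.

Lemma coordmxKV M : coordmx (B^T *m M *m B) = M.
Proof.
rewrite /coordmx !mulmxA -trmx_mul adapted_basisKV trmx1 mul1mx.
by rewrite -mulmxA adapted_basisKV mulmx1.
Qed.

Lemma coordmx_wedge u v : coordmx (wedge u v) = wedge (u *m Bi) (v *m Bi).
Proof. by rewrite /coordmx wedge_mulmx. Qed.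

Lemma coordmx_skew M : M^T = - M -> (coordmx M)^T = - coordmx M.
Proof. exact: tr_skew_mulmx. Qed.

Lemma coordmxP a M N i j :
  coordmx (a *: M + N) i j = a * coordmx M i j + coordmx N i j.
Proof. by rewrite /coordmx mulmxDr mulmxDl -scalemxAr -scalemxAl !mxE. Qed.

Definition depth (i j : 'I_d) : nat := level i + level j.

Lemma Ulevel_coord_nz b v j :
  v \in Ulevel b -> (v *m Bi) 0 j != 0 -> (level j <= b)%N.
Proof. by move=> /memUlevel_coord v0; apply: contraNT; rewrite -ltnNge => /v0 ->. Qed.

(* [A^2 U], [U /\ V] and [A^2 V] are the cases
   [(a, b) = (false, false), (false, true), (true, true)]. *)
Lemma mem_wedge2_Ulevel a b M : (2%:R : F) != 0 ->
  M \in wedge2 (Ulevel a) (Ulevel b) <->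
  M^T = - M /\ forall i j, coordmx M i j != 0 -> (depth i j <= a + b)%N.
Proof.
move=> two_neq0; split=> [MW | [skM suppM]].
  split; first exact: wedge2_skew MW.
  move: M MW; apply: wedge2_ind => [|c M N hM hN|u v uS vT] i j.
  - by rewrite /coordmx mulmx0 mul0mx mxE eqxx.
  - rewrite coordmxP; have [M0 | /hM dep _ //] := eqVneq (coordmx M i j) 0.
    by rewrite M0 mulr0 add0r => /hN.
  - rewrite coordmx_wedge wedge_coef.
    have [uv0 | ] := eqVneq ((u *m Bi) 0 i * (v *m Bi) 0 j) 0.
      rewrite uv0 sub0r oppr_eq0 mulf_eq0 negb_or => /andP [vi uj].
      rewrite /depth addnC.
      by apply: leq_add; [apply: Ulevel_coord_nz uj | apply: Ulevel_coord_nz vi].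
    rewrite mulf_eq0 negb_or => /andP [ui vj] _.
    by apply: leq_add; [apply: Ulevel_coord_nz ui | apply: Ulevel_coord_nz vj].
rewrite -[M]coordmxK; apply: wedge2_skew_mulmx => //; first exact: coordmx_skew.
move=> i j /suppM {suppM}; rewrite /depth !row_adapted_basis_Ulevel.
by move: (level i) (level j) a b => [] [] [] [] //=; auto.
Qed.

End AdaptedBasis.

Section Classification.
Variables (F : finFieldType) (d : nat) (U : {vspace 'rV[F]_d}).
Hypothesis two_neq0 : (2%:R : F) != 0.
Local Notation B := (adapted_basis U).
Local Notation Bi := (invmx (adapted_basis U)).
Local Notation level := (level U).
Local Notation depth := (depth U).
Local Notation coordmx := (coordmx U).

Definition lower_block_triangular (G : 'M[F]_d) :=
  forall i j, ~~ level i -> level j -> G i j = 0.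

Lemma inH_adapted G : G \in unitmx -> lower_block_triangular G -> inH U (Bi *m G *m B).
Proof.
move=> Gu Gtri; split; first by rewrite !unitmx_mul unitmx_inv adapted_basis_unit Gu.
move=> u /memU_coord u0; apply/memU_coord => j lj.
rewrite -!mulmxA adapted_basisKV mulmx1 mulmxA mxE big1 // => k _.
by have [lk | nlk] := boolP (level k); [rewrite u0 // mul0r | rewrite Gtri // mulr0].
Qed.

Variable W : {vspace 'M[F]_d}.
Hypothesis W_skew : {in W, forall M, M^T = - M}.
Hypothesis W_inv : Hinvariant U W.

Definition coordW : {vspace 'M[F]_d} := (linfun (mulmxr Bi \o mulmx Bi^T) @: W)%VS.

Lemma mem_coordW N : (N \in coordW) = (B^T *m N *m B \in W).
Proof.
apply/memv_imgP/idP => [[M MW ->] | NW]; first by rewrite lfunE /= coordmxK.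
by exists (B^T *m N *m B); rewrite // lfunE; exact/esym/coordmxKV.
Qed.

Lemma coordW_skew N : N \in coordW -> N^T = - N.
Proof. by rewrite mem_coordW => /W_skew/(coordmx_skew U); rewrite coordmxKV. Qed.

Lemma coordW_act G N : G \in unitmx -> lower_block_triangular G ->
  N \in coordW -> G^T *m N *m G \in coordW.
Proof.
move=> Gu Gtri; rewrite !mem_coordW => /(W_inv (inH_adapted Gu Gtri)).
rewrite !trmx_mul !mulmxA -(mulmxA _ Bi^T) -(trmx_mul B) adapted_basisKV trmx1 mulmx1.
by rewrite -(mulmxA _ B Bi) adapted_basisKV mulmx1.
Qed.

Lemma coordW_ewedge_sum (N : 'M[F]_d) : N^T = - N ->
  (forall k l, N k l != 0 -> ewedge k l \in coordW) -> N \in coordW.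
Proof.
move=> skN suppN; rewrite (skew_sum_ewedge two_neq0 skN) memvZ //.
apply: memv_suml => k _; apply: memv_suml => l _.
by have [->|/suppN kl] := eqVneq (N k l) 0; rewrite ?scale0r ?mem0v ?memvZ.
Qed.

Definition sign_mx (k : 'I_d) : 'M[F]_d := diag_mx (\row_a (-1) ^+ (a == k)).

Lemma sign_mx_unit k : sign_mx k \in unitmx.
Proof.
suff /mulmx1_unit [] : sign_mx k *m sign_mx k = 1%:M by [].
apply/matrixP => a b; rewrite mul_diag_mx !mxE mulrnAr -expr2 -exprM mulnC.
by rewrite exprM sqrrN !expr1n.
Qed.

Lemma sign_mx_lower_block_triangular k : lower_block_triangular (sign_mx k).
Proof.
move=> i j li lj; rewrite mxE; case: eqP => [ij|]; last by rewrite mulr0n.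
by move: li; rewrite ij lj.
Qed.

(* Conjugation by [sign_mx k] negates exactly these entries, which is why
   [cross_part k] preserves H-submodules. *)
Definition cross_part (k : 'I_d) (N : 'M[F]_d) : 'M[F]_d :=
  \matrix_(a, b) (if (a == k) (+) (b == k) then N a b else 0).

Lemma cross_partE k N :
  cross_part k N = 2%:R^-1 *: (N - (sign_mx k)^T *m N *m sign_mx k).
Proof.
apply/matrixP => a b; rewrite tr_diag_mx mul_mx_diag mul_diag_mx !mxE.
have halfK (x : F) : 2%:R^-1 * (x + x) = x.
  by rewrite -[x + x]mulr2n -[x *+ 2]mulr_natl mulKf.
by case: (a == k); case: (b == k); rewrite /= ?expr1 ?expr0 ?mulN1r ?mulrN1 ?mul1r
  ?mulr1 ?opprK ?subrr ?mulr0 ?halfK.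
Qed.

Lemma coordW_cross_part k N : N \in coordW -> cross_part k N \in coordW.
Proof.
move=> NW; rewrite cross_partE memvZ // memvB //.
by apply: coordW_act => //; [apply: sign_mx_unit | apply: sign_mx_lower_block_triangular].
Qed.

Lemma cross_part2 (N : 'M[F]_d) i j : N^T = - N -> i != j ->
  cross_part j (cross_part i N) = N i j *: ewedge i j.
Proof.
move=> skN ij; have ji : j != i by rewrite eq_sym.
apply/matrixP => a b; have /matrixP /(_ b a) := skN; rewrite ewedgeE !mxE => Nab.
case: (eqVneq a i) => [ai|ai]; case: (eqVneq a j) => [aj|aj];
  case: (eqVneq b i) => [bi|bi]; case: (eqVneq b j) => [bj|bj];
  subst; rewrite ?eqxx ?(negPf ij) ?(negPf ji) ?(negPf ai) ?(negPf aj);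
  rewrite ?(negPf bi) ?(negPf bj) /=;
  rewrite ?subr0 ?sub0r ?subrr ?mulr0 ?mulr1 ?mulrN1 ?oppr0 //;
  by rewrite eqxx in ij.
Qed.

Lemma coordW_ewedge N i j : N \in coordW -> N i j != 0 -> ewedge i j \in coordW.
Proof.
move=> NW Nij; have skN := coordW_skew NW.
have ij : i != j by apply: contraNneq Nij => ->; rewrite skew_diag.
have := coordW_cross_part j (coordW_cross_part i NW).
by rewrite cross_part2 // -{2}[ewedge i j](scalerK Nij) => /memvZ.
Qed.

Definition transvection (i l : 'I_d) : 'M[F]_d := 1%:M + delta_mx i l.

Lemma transvection_unit i l : i != l -> transvection i l \in unitmx.
Proof.
move=> il; suff /mulmx1_unit [] : transvection i l *m (1%:M - delta_mx i l) = 1%:M by [].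
rewrite mulmxDl !mulmxBr !mul1mx mulmx1 mul_delta_mx_cond [l == i]eq_sym (negPf il).
by rewrite mulr0n subr0 subrK.
Qed.

Lemma transvection_lower_block_triangular i l :
  (level l <= level i)%N -> lower_block_triangular (transvection i l).
Proof.
move=> lli a b la lb; rewrite !mxE.
have [ab | _] := eqVneq a b; first by move: la; rewrite ab lb.
rewrite mulr0n add0r; have [ai | _] := eqVneq a i; last by rewrite mulr0n.
have [bl | _] := eqVneq b l; last by rewrite andbF mulr0n.
by move: lli la lb; rewrite ai bl; move: (level i) (level l) => [] [].
Qed.

Lemma transvection_ewedge i j l : i != j ->
  (transvection i l)^T *m ewedge i j *m transvection i l = ewedge i j + ewedge l j.
Proof.
move=> ij; rewrite ewedge_mulmx /transvection !rowE !mulmxDr !mulmx1.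
by rewrite !mul_delta_mx_cond eqxx mulr1n [j == i]eq_sym (negPf ij) mulr0n addr0 wedgeDl.
Qed.

Lemma coordW_ewedge_movel i j l : ewedge i j \in coordW -> i != j ->
  (level l <= level i)%N -> ewedge l j \in coordW.
Proof.
move=> eW ij lli; have [<- // | il] := eqVneq i l.
have := coordW_act (transvection_unit il) (transvection_lower_block_triangular lli) eW.
by rewrite transvection_ewedge // => /memvB /(_ eW); rewrite addrC addKr.
Qed.

Lemma coordW_ewedge_mover i j l : ewedge i j \in coordW -> i != j ->
  (level l <= level j)%N -> ewedge i l \in coordW.
Proof.
rewrite -memvN -ewedgeC eq_sym => eW ji llj.
by rewrite -memvN -ewedgeC; apply: coordW_ewedge_movel eW ji llj.
Qed.

Lemma coordW_ewedge_depth i j k l : ewedge i j \in coordW -> i != j -> k != l ->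
  (depth k l <= depth i j)%N -> ewedge k l \in coordW.
Proof.
have reach i' j' : ewedge i' j' \in coordW -> i' != j' -> k != l ->
    (level k <= level i')%N -> (level l <= level j')%N -> ewedge k l \in coordW.
  move=> eW ij kl lki llj; have [kj | kj] := eqVneq k j'.
    rewrite -kj in eW ij llj *; rewrite -memvN -ewedgeC in eW.
    by apply: coordW_ewedge_mover eW _ (leq_trans llj lki); rewrite eq_sym.
  exact: coordW_ewedge_mover (coordW_ewedge_movel eW ij lki) kj llj.
move=> eW ij kl dkl.
have : ((level k <= level i) && (level l <= level j)
         || (level k <= level j) && (level l <= level i))%N.
  by move: dkl; rewrite /depth; move: (level i) (level j) (level k) (level l) => [] [] [] [].
case/orP => /andP [lki llj]; first exact: reach eW ij kl lki llj.
by apply: reach lki llj; [rewrite ewedgeC memvN | rewrite eq_sym | ].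
Qed.

Lemma Hsubmodule_wedge2_Ulevel : W != 0%VS ->
  exists2 m, (m <= 2)%N & W = wedge2 (Ulevel U (1 < m)%N) (Ulevel U (0 < m)%N).
Proof.
move=> Wn0; have [i0 [j0 nz0]] : exists i j, coordmx (vpick W) i j != 0.
  apply/matrix0Pn; apply: contraNneq Wn0 => c0.
  by rewrite -vpick0 -[vpick W](coordmxK U) c0 mulmx0 mul0mx.
have diag_nz N k l : N \in coordW -> N k l != 0 -> k != l.
  by move=> NW; apply: contraNneq => ->; rewrite skew_diag // coordW_skew.
have cW M : M \in W -> coordmx M \in coordW by rewrite mem_coordW coordmxK.
pose inW (p : 'I_d * 'I_d) := (p.1 != p.2) && (ewedge p.1 p.2 \in coordW).
have inW0 : inW (i0, j0).
  have pickW := cW _ (memv_pick W).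
  by rewrite /inW (diag_nz _ _ _ pickW nz0) (coordW_ewedge pickW nz0).
(* [W] is spanned by the [ewedge k l] no deeper than a deepest [ewedge i j] in it. *)
case: (arg_maxnP (fun p => depth p.1 p.2) inW0) => [[i j] /andP [/= ij eW] maxij].
exists (depth i j); first by rewrite /depth; move: (level i) (level j) => [] [].
have depthE : ((1 < depth i j) + (0 < depth i j))%N = depth i j.
  by rewrite /depth; move: (level i) (level j) => [] [].
apply/vspaceP => M; apply/idP/idP => [MW | /(mem_wedge2_Ulevel U _ _ _ two_neq0)].
  apply/(mem_wedge2_Ulevel U _ _ _ two_neq0); rewrite depthE; split; first exact: W_skew.
  move=> k l nz; have kl := diag_nz _ _ _ (cW _ MW) nz.
  by apply: (maxij (k, l)); rewrite /inW kl (coordW_ewedge (cW _ MW) nz).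
rewrite depthE => -[skM suppM]; rewrite -(coordmxK U M) -mem_coordW.
apply: coordW_ewedge_sum; first exact: coordmx_skew.
move=> k l nz.
have kl : k != l by apply: contraNneq nz => ->; rewrite skew_diag ?coordmx_skew.
exact: coordW_ewedge_depth eW ij kl (suppM k l nz).
Qed.

Lemma Hsubmodule_classify :
  [\/ W = 0%VS, W = wedge2 U U, W = wedge2 U fullv | W = wedge2 fullv fullv].
Proof.
have [-> | /Hsubmodule_wedge2_Ulevel [m]] := eqVneq W 0%VS; first exact: Or41.
by case: m => [|[|[|]]] // _ ->; [apply: Or42 | apply: Or43 | apply: Or44].
Qed.

End Classification.

Lemma dimv_ker_img (F : fieldType) (vT wT : vectType F) (f : 'Hom(vT, wT))
    (X K : {vspace vT}) (Y : {vspace wT}) :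
  (K <= X)%VS -> {in X, forall v, f v = 0 <-> v \in K} ->
  (forall w, w \in Y <-> exists2 v, v \in X & f v = w) ->
  \dim X = (\dim K + \dim Y)%N.
Proof.
move=> sKX kerf imgf; rewrite -(limg_ker_dim f X); congr (_ + _)%N; congr (\dim _).
  apply/vspaceP => v; rewrite memv_cap memv_ker.
  apply/andP/idP => [[vX /eqP/(kerf _ vX)] // | vK].
  by have vX := subvP sKX _ vK; split; last by apply/eqP/(kerf _ vX).
apply/vspaceP => w; apply/memv_imgP/idP => [[v vX ->] | /imgf [v vX <-]].
  by apply/imgf; exists v.
by exists v.
Qed.

Section Quotient.
Variables (F : finFieldType) (d : nat) (U : {vspace 'rV[F]_d}).
Local Notation r := (\dim U).
Local Notation B := (adapted_basis U).
Local Notation Bi := (invmx (adapted_basis U)).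
Local Notation level := (level U).
Local Notation coordmx := (coordmx U).
Local Notation A2U := (wedge2 U U).
Local Notation UV := (wedge2 U fullv).
Local Notation A2V := (wedge2 (fullv : {vspace 'rV[F]_d}) fullv).

Lemma inH_preim g v : inH U g -> v *m g \in U -> v \in U.
Proof.
move=> [gu gU] vgU; pose f := linfun (mulmxr g : 'rV[F]_d -> 'rV[F]_d).
have fE w : f w = w *m g by rewrite lfunE.
have fU : (f @: U = U)%VS.
  apply/eqP; rewrite eqEdim limg_dim_eq ?leqnn ?andbT.
    by apply/subvP => w /memv_imgP [u uU ->]; rewrite fE gU.
  apply/eqP; rewrite -subv0; apply/subvP => w; rewrite memv_cap memv_ker fE memv0.
  by case/andP => _ /eqP wg0; rewrite -(mulmxK gu w) wg0 mul0mx.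
move: vgU; rewrite -{1}fU => /memv_imgP [u uU].
by rewrite fE => /(can_inj (mulmxK gu)) ->.
Qed.

Variable P : 'M[F]_(d, d - r).
Hypothesis P_ker : forall v, v *m P = 0 <-> v \in U.
Hypothesis P_full : row_full P.

Lemma quotient_coord_eq0 (z : 'rV[F]_d) :
  z *m (B *m P) = 0 <-> forall j, level j -> z 0 j = 0.
Proof.
have zBK : z *m B *m Bi = z by rewrite mulmxK ?adapted_basis_unit.
rewrite mulmxA; split=> [/P_ker/memU_coord | z0]; first by rewrite zBK.
by apply/P_ker/memU_coord; rewrite zBK.
Qed.

Lemma mulmx_quotient_coord_eq0 m (X : 'M[F]_(m, d)) :
  X *m (B *m P) = 0 <-> forall a j, level j -> X a j = 0.
Proof.
split=> [X0 a | X0].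
  have /quotient_coord_eq0 Xa0 : row a X *m (B *m P) = 0 by rewrite -row_mul X0 row0.
  by move=> j /Xa0; rewrite mxE.
apply/row_matrixP => a; rewrite row_mul row0; apply/quotient_coord_eq0 => j lj.
by rewrite mxE X0.
Qed.

Lemma quotient_wedge_eq0 M :
  P^T *m M *m P = 0 <-> forall i j, level i -> level j -> coordmx M i j = 0.
Proof.
have -> : P^T *m M *m P = (B *m P)^T *m (coordmx M *m (B *m P)).
  by rewrite -{1}(coordmxK U M) trmx_mul !mulmxA.
set N := coordmx M; set K := B *m P.
have trE (Y : 'M[F]_(d, d - r)) : K^T *m Y = 0 <-> Y^T *m K = 0.
  have -> : K^T *m Y = (Y^T *m K)^T by rewrite [RHS]trmx_mul trmxK.
  by split=> [/(congr1 trmx) | ->]; rewrite ?trmxK ?trmx0.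
have rowNK i : row i (N *m K) = 0 <-> forall j, level j -> N i j = 0.
  have rowNE j : row i N 0 j = N i j by rewrite mxE.
  by rewrite row_mul quotient_coord_eq0; split=> N0 j /N0; rewrite rowNE => ->.
rewrite trE mulmx_quotient_coord_eq0; split=> [NK0 i j li | N0 a j lj].
  by apply/(rowNK i).1 => //; apply/rowP => a; move: (NK0 a i li); rewrite !mxE.
have /rowNK /rowP /(_ a) : forall l, level l -> N j l = 0 := N0 j ^~ lj.
by rewrite !mxE.
Qed.

Lemma quotient_tensor_eq0 M :
  M *m P = 0 <-> forall i j, level j -> coordmx M i j = 0.
Proof.
have -> : M *m P = B^T *m (coordmx M *m (B *m P)).
  by rewrite -{1}(coordmxK U M) !mulmxA.
rewrite -mulmx_quotient_coord_eq0; split=> [BNK0 | ->]; last by rewrite mulmx0.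
have Btu : B^T \in unitmx by rewrite unitmx_tr adapted_basis_unit.
by rewrite -[_ *m (B *m P)](mulKmx Btu) BNK0 mulmx0.
Qed.

Lemma wedge2_quotient_onto (N : 'M[F]_(d - r)) : (2%:R : F) != 0 ->
  N \in wedge2 fullv fullv <-> exists2 M, M \in A2V & P^T *m M *m P = N.
Proof.
move=> two_neq0; split=> [/(mem_wedge2f _ two_neq0) skN | [M MA2V <-]].
  have [Q QP] := row_fullP P_full.
  exists (Q^T *m N *m Q); first exact/(mem_wedge2f _ two_neq0)/tr_skew_mulmx.
  by rewrite !mulmxA -trmx_mul QP trmx1 mul1mx -mulmxA QP mulmx1.
by apply: wedge2_mulmx MA2V => u _; rewrite memvf.
Qed.

Lemma wedge2_quotient_ker M : (2%:R : F) != 0 -> M \in A2V ->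
  P^T *m M *m P = 0 <-> M \in UV.
Proof.
move=> two_neq0 /(mem_wedge2f _ two_neq0) skM; rewrite quotient_wedge_eq0.
apply: iff_trans (iff_sym (mem_wedge2_Ulevel U false true M two_neq0)).
split=> [M0 | [_ suppM] i j li lj]; last first.
  by apply: contraTeq isT => /suppM; rewrite /depth li lj.
split=> // i j; apply: contraTT; rewrite negbK; move: (M0 i j); rewrite /depth.
by move: (level i) (level j) => [] [] // /(_ isT isT) ->.
Qed.

Lemma tensor2_quotient_onto (N : 'M[F]_(d, d - r)) :
  N \in tensor2 U fullv <-> exists2 M, M \in UV & M *m P = N.
Proof.
split; last first.
  case=> M + <-; move: M; apply: wedge2_ind => [|a M M' hM hM'|u v uU _].
  - by rewrite mul0mx mem0v.
  - by rewrite mulmxDl -scalemxAl memvD ?memvZ.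
  - by rewrite /wedge mulmxBl -!mulmxA (P_ker u).2 // mulmx0 subr0 mem_tensor2 ?memvf.
have [Q QP] := row_fullP P_full.
move: N; apply: tensor2_ind => [|a N N' [M MUV <-] [M' MUV' <-]|u v uU _].
- by exists 0; rewrite ?mem0v ?mul0mx.
- by exists (a *: M + M'); rewrite ?memvD ?memvZ // mulmxDl scalemxAl.
- exists (wedge u (v *m Q)); first by rewrite mem_wedge2 ?memvf.
  by rewrite /wedge mulmxBl -!mulmxA QP mulmx1 (P_ker u).2 // mulmx0 subr0.
Qed.

Lemma tensor2_quotient_ker M : (2%:R : F) != 0 -> M \in UV ->
  M *m P = 0 <-> M \in A2U.
Proof.
move=> two_neq0 /(mem_wedge2_Ulevel U false true M two_neq0) [skM _].
rewrite quotient_tensor_eq0.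
apply: iff_trans (iff_sym (mem_wedge2_Ulevel U false false M two_neq0)).
split=> [M0 | [_ suppM] i j lj]; last first.
  by apply: contraTeq isT => /suppM; rewrite /depth lj addn1.
split=> // i j nz; rewrite /depth leqn0 addn_eq0 !eqb0.
apply/andP; split; apply: contra nz => l; apply/eqP; last exact: M0.
by rewrite skew_coef ?coordmx_skew // M0 ?oppr0.
Qed.

Lemma quotient_equivariant g : inH U g ->
  exists gb : 'M[F]_(d - r),
    [/\ gb \in unitmx, g *m P = P *m gb &
        forall M : 'M[F]_d,
          P^T *m (g^T *m M *m g) *m P = gb^T *m (P^T *m M *m P) *m gb
          /\ (g^T *m M *m g) *m P = g^T *m (M *m P) *m gb].
Proof.
move=> gH; have [gu gU] := gH; have [Q QP] := row_fullP P_full.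
(* [v - v P Q] lies in [U], hence so does its image under [g]. *)
have gP : g *m P = P *m (Q *m g *m P).
  apply/row_matrixP => i; rewrite !rowE; set v := delta_mx 0 i.
  have : (v - v *m P *m Q) *m P = 0.
    by rewrite mulmxBl -(mulmxA (v *m P) Q P) QP mulmx1 subrr.
  move/P_ker => /gU /P_ker; rewrite !mulmxBl => /eqP; rewrite subr_eq0 => /eqP.
  by rewrite !mulmxA.
exists (Q *m g *m P); set gb := Q *m g *m P in gP *; split => // [|M].
  rewrite -row_free_unit; apply: inj_row_free => x xgb0.
  have : x *m Q *m g \in U by apply/P_ker; rewrite -xgb0 !mulmxA.
  by move=> /(inH_preim gH) /P_ker; rewrite -mulmxA QP mulmx1.
split; last by rewrite -!mulmxA gP.
by rewrite !mulmxA -trmx_mul gP -(mulmxA _ g P) gP trmx_mul !mulmxA.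
Qed.

End Quotient.

Section Dimensions.
Variables (F : finFieldType) (d : nat) (U : {vspace 'rV[F]_d}).
Local Notation r := (\dim U).
Local Notation J := (vbasis_mx U).

Lemma dim_tensor2 m : \dim (tensor2 U (fullv : {vspace 'rV[F]_m})) = (r * m)%N.
Proof.
have [J' JJ'] := row_freeP (vbasis_mx_free U).
pose f := linfun (mulmx J^T : 'M[F]_(r, m) -> 'M[F]_(d, m)).
have fE K : f K = J^T *m K by rewrite lfunE.
have kerf : {in fullv, forall K, f K = 0 <-> K \in 0%VS}.
  move=> K _; rewrite memv0 fE; split=> [JK0 | /eqP ->]; last by rewrite mulmx0.
  have <- : J'^T *m (J^T *m K) = K by rewrite mulmxA -trmx_mul JJ' trmx1 mul1mx.
  by rewrite JK0 mulmx0.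
have imgf N : N \in tensor2 U fullv <-> exists2 K, K \in fullv & f K = N.
  split=> [| [K _ <-]]; last first.
    rewrite fE [K]matrix_sum_delta mulmx_sumr; apply: memv_suml => i _.
    rewrite mulmx_sumr; apply: memv_suml => j _; rewrite -scalemxAr memvZ //.
    rewrite -(@mul_delta_mx F r 1 m 0 i j) mulmxA -trmx_delta -trmx_mul -rowE.
    by rewrite mem_tensor2 ?memvf // rowE vbasis_mx_mem.
  move: N; apply: tensor2_ind => [|a N N' [K _ <-] [K' _ <-]|u v uU _].
  - by exists 0; rewrite ?memvf // linear0.
  - by exists (a *: K + K'); rewrite ?memvf // linearP.
  - have [x ->] := vbasis_mxP uU; exists (x^T *m v); first exact: memvf.
    by rewrite fE trmx_mul mulmxA.
have := dimv_ker_img (sub0v _) kerf imgf.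
by rewrite dimv0 dimvf dim_matrix add0n => <-.
Qed.

Lemma dim_wedge2_sub : \dim (wedge2 U U) = \dim (wedge2 fullv fullv : {vspace 'M[F]_r}).
Proof.
have [J' JJ'] := row_freeP (vbasis_mx_free U).
pose f := linfun (mulmxr J \o mulmx J^T : 'M[F]_r -> 'M[F]_d).
have fE K : f K = J^T *m K *m J by rewrite lfunE.
have kerf : {in wedge2 fullv fullv, forall K, f K = 0 <-> K \in 0%VS}.
  move=> K _; rewrite memv0 fE; split=> [JKJ0 | /eqP ->]; last by rewrite mulmx0 mul0mx.
  have <- : J'^T *m (J^T *m K *m J) *m J' = K.
    by rewrite !mulmxA -trmx_mul JJ' trmx1 mul1mx -mulmxA JJ' mulmx1.
  by rewrite JKJ0 mulmx0 mul0mx.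
have imgf M : M \in wedge2 U U <-> exists2 K, K \in wedge2 fullv fullv & f K = M.
  split=> [| [K KW <-]]; last first.
    by rewrite fE (wedge2_mulmx _ _ KW) // => u _; apply: vbasis_mx_mem.
  move: M; apply: wedge2_ind => [|a M M' [K KW <-] [K' KW' <-]|u v uU vU].
  - by exists 0; rewrite ?mem0v // linear0.
  - by exists (a *: K + K'); rewrite ?memvD ?memvZ // linearP.
  - have [[x ->] [y ->]] := (vbasis_mxP uU, vbasis_mxP vU).
    by exists (wedge x y); rewrite ?mem_wedge2 ?memvf // fE wedge_mulmx.
by rewrite (dimv_ker_img (sub0v _) kerf imgf) dimv0.
Qed.

Hypothesis two_neq0 : (2%:R : F) != 0.
Local Notation B := (adapted_basis U).
Local Notation Bi := (invmx (adapted_basis U)).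

Lemma quotient_index_subproof (b : 'I_(d - r)) : (r + b < d)%N.
Proof. by have := ltn_ord b; have := dimv_leq U; lia. Qed.

Definition quotient_index (b : 'I_(d - r)) : 'I_d := Ordinal (quotient_index_subproof b).

Definition quotient_select : 'M[F]_(d, d - r) :=
  \matrix_(i, b) (i == quotient_index b)%:R.

(* Projection onto the last [d - r] adapted coordinates: a concrete V -> V/U. *)
Definition quotient_mx : 'M[F]_(d, d - r) := Bi *m quotient_select.

Lemma mulmx_quotient_select m (A : 'M[F]_(m, d)) i b :
  (A *m quotient_select) i b = A i (quotient_index b).
Proof.
rewrite mxE (bigD1 (quotient_index b)) //= mxE eqxx mulr1 big1 ?addr0 // => k kb.
by rewrite mxE (negPf kb) mulr0.
Qed.

Lemma quotient_mx_ker v : v *m quotient_mx = 0 <-> v \in U.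
Proof.
rewrite memU_coord mulmxA; split=> [/rowP v0 j lj | v0].
  have ltjr : (j - r < d - r)%N by move: lj; rewrite /level; have := ltn_ord j; lia.
  have -> : j = quotient_index (Ordinal ltjr).
    by apply: val_inj => /=; move: lj; rewrite /level; lia.
  by rewrite -mulmx_quotient_select v0 mxE.
by apply/rowP => b; rewrite mulmx_quotient_select v0 ?mxE // /level leq_addr.
Qed.

Lemma quotient_mx_full : row_full quotient_mx.
Proof.
apply/row_fullP; exists (quotient_select^T *m B).
rewrite /quotient_mx mulmxA -(mulmxA _ B) adapted_basisKV mulmx1.
apply/matrixP => a b; rewrite mulmx_quotient_select !mxE.
by rewrite -(inj_eq val_inj) /= eqn_add2l eq_sym.
Qed.

Lemma dim_wedge2_quotient : \dim (wedge2 fullv fullv : {vspace 'M[F]_d}) =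
  (\dim (wedge2 U fullv) + \dim (wedge2 fullv fullv : {vspace 'M[F]_(d - r)}))%N.
Proof.
pose P := quotient_mx; pose f := linfun (mulmxr P \o mulmx P^T).
apply: (dimv_ker_img (f := f)); first by apply: wedge2S; rewrite ?subvf.
  move=> M MA2V; rewrite lfunE.
  exact: wedge2_quotient_ker quotient_mx_ker M two_neq0 MA2V.
move=> N; rewrite (wedge2_quotient_onto quotient_mx_full N two_neq0).
by split=> -[M MA2V <-]; exists M; rewrite ?lfunE.
Qed.

Lemma dim_wedge2_tensor : \dim (wedge2 U fullv) =
  (\dim (wedge2 U U) + \dim (tensor2 U (fullv : {vspace 'rV[F]_(d - r)})))%N.
Proof.
pose f := linfun (mulmxr quotient_mx : 'M[F]_d -> 'M[F]_(d, d - r)).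
apply: (dimv_ker_img (f := f)); first by apply: wedge2S; rewrite ?subvf.
  move=> M MUV; rewrite lfunE.
  exact: tensor2_quotient_ker quotient_mx_ker M two_neq0 MUV.
move=> N; rewrite (tensor2_quotient_onto quotient_mx_ker quotient_mx_full N).
by split=> -[M MUV <-]; exists M; rewrite ?lfunE.
Qed.

End Dimensions.

Lemma wedge2f_small (F : finFieldType) n : (n <= 1)%N ->
  wedge2 fullv fullv = 0%VS :> {vspace 'M[F]_n}.
Proof.
move=> le_n1; apply/eqP; rewrite -subv0; apply/subvP.
apply: wedge2_ind => [|a M N M0 N0|u v _ _]; first exact: mem0v.
  by rewrite memvD ?memvZ.
rewrite memv0; apply/eqP/matrixP => i j; rewrite wedge_coef mxE.
have -> : i = j by apply: ord_inj; have := ltn_ord i; have := ltn_ord j; lia.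
by rewrite mulrC subrr.
Qed.

Lemma dim_wedge2f (F : finFieldType) n : (2%:R : F) != 0 ->
  \dim (wedge2 fullv fullv : {vspace 'M[F]_n}) = 'C(n, 2).
Proof.
move=> two_neq0; elim: n => [|n IHn]; first by rewrite wedge2f_small ?dimv0.
have [-> | n_gt0] := posnP n; first by rewrite wedge2f_small ?dimv0.
pose e0 : 'rV[F]_n.+1 := delta_mx 0 ord0; pose U := (<[e0]>^C)%VS.
have dimU : \dim U = n.
  rewrite dimv_compl dim_vline dimvf dim_matrix mul1r.
  suff -> : e0 != 0 by rewrite subn1.
by apply/negP => /eqP/rowP/(_ ord0); rewrite !mxE !eqxx => /eqP; rewrite oner_eq0.
rewrite (dim_wedge2_quotient U two_neq0) wedge2f_small ?dimU ?subSnn // dimv0 addn0.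
rewrite (dim_wedge2_tensor U two_neq0) dim_tensor2 dim_wedge2_sub dimU IHn.
by rewrite subSnn muln1 binS bin1.
Qed.

Lemma Hinvariant0 (F : fieldType) d (U : {vspace 'rV[F]_d}) : Hinvariant U 0%VS.
Proof. by move=> g _ M; rewrite memv0 => /eqP ->; rewrite mulmx0 mul0mx mem0v. Qed.

Lemma Hinvariant_wedge2_Ulevel (F : finFieldType) d (U : {vspace 'rV[F]_d}) a b :
  Hinvariant U (wedge2 (Ulevel U a) (Ulevel U b)).
Proof.
have stab c g : inH U g -> {in Ulevel U c, forall u, u *m g \in Ulevel U c}.
  by case: c => [_ u _ | [_ gU]]; [exact: memvf | exact: gU].
by move=> g gH; apply: wedge2_mulmx; apply: stab.
Qed.

Theorem mainTheorem9 (F : finFieldType) (d r : nat) (U : {vspace 'rV[F]_d}) :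
  ~~ (2%N \in [pchar F]) -> (2 < d)%N -> (0 < r < d)%N -> \dim U = r ->
  let A2U := wedge2 U U in
  let UV := wedge2 U fullv in
  let A2V := wedge2 (fullv : {vspace 'rV[F]_d}) fullv in
  [/\ (* the H-submodules of A^2 V are exactly 0, A^2 U, U /\ V, A^2 V *)
      (forall W : {vspace 'M[F]_d},
         ((W <= A2V)%VS /\ Hinvariant U W) <->
         [\/ W = 0%VS, W = A2U, W = UV | W = A2V]),
      (* they form a chain (uniserial) *)
      (A2U <= UV)%VS /\ (UV <= A2V)%VS,
      (* factors: for any quotient map pi : V -> V/U = F^(d-r), v |-> v P *)
      (forall P : 'M[F]_(d, d - r),
         (forall v : 'rV[F]_d, v *m P = 0 <-> v \in U) -> row_full P ->
         [/\ (* A^2 pi : A^2 V -> A^2 (V/U) is onto with kernel U /\ V *)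
             (forall N : 'M[F]_(d - r),
                N \in wedge2 (fullv : {vspace 'rV[F]_(d - r)}) fullv <->
                exists2 M, M \in A2V & P^T *m M *m P = N),
             (forall M, M \in A2V -> (P^T *m M *m P = 0 <-> M \in UV)),
             (* u /\ v |-> u (x) pi v : U /\ V -> U (x) V/U is onto with kernel A^2 U *)
             (forall N : 'M[F]_(d, d - r),
                N \in tensor2 U (fullv : {vspace 'rV[F]_(d - r)}) <->
                exists2 M, M \in UV & M *m P = N),
             (forall M, M \in UV -> (M *m P = 0 <-> M \in A2U)) &
             (* both maps are H-equivariant for the induced action gb on V/U *)
             (forall g, inH U g ->
                exists gb : 'M[F]_(d - r),
                  [/\ gb \in unitmx, g *m P = P *m gb &
                      (forall M : 'M[F]_d,
                        P^T *m (g^T *m M *m g) *m P = gb^T *m (P^T *m M *m P) *m gb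
                        /\ (g^T *m M *m g) *m P = g^T *m (M *m P) *m gb)])]) &
      (* dimensions of the factors *)
      [/\ \dim A2V = (\dim UV + 'C(d - r, 2))%N,
          \dim UV = (\dim A2U + r * (d - r))%N &
          \dim A2U = 'C(r, 2)]].
Proof.
move=> not_char2 _ _ <- /=.
have two_neq0 : (2%:R : F) != 0 by apply: contra not_char2 => two0; rewrite inE /= two0.
have A2U_UV : (wedge2 U U <= wedge2 U fullv)%VS by apply: wedge2S; rewrite ?subvv ?subvf.
have UV_A2V : (wedge2 U fullv <= wedge2 fullv fullv)%VS.
  by apply: wedge2S; rewrite ?subvv ?subvf.
split=> //.
- move=> W; split=> [[/subvP WA2V WH] | ].
    have W_skew : {in W, forall M, M^T = - M} by move=> M /WA2V /wedge2_skew.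
    case: (Hsubmodule_classify two_neq0 W_skew WH) => ->;
      [exact: Or41 | exact: Or42 | exact: Or43 | exact: Or44].
  case=> ->; split; rewrite ?sub0v ?(subv_trans A2U_UV) ?subvv //.
  + exact: Hinvariant0.
  + exact: (Hinvariant_wedge2_Ulevel (a := false) (b := false)).
  + exact: (Hinvariant_wedge2_Ulevel (a := false) (b := true)).
  + exact: (Hinvariant_wedge2_Ulevel (a := true) (b := true)).
- move=> P P_ker P_full; split=> [N | M | N | M | g].
  + exact: wedge2_quotient_onto.
  + exact: wedge2_quotient_ker.
  + exact: tensor2_quotient_onto.
  + exact: tensor2_quotient_ker.
  + exact: quotient_equivariant.
split.
- by rewrite (dim_wedge2_quotient U two_neq0) dim_wedge2f.
- by rewrite (dim_wedge2_tensor U two_neq0) dim_tensor2.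
- by rewrite dim_wedge2_sub dim_wedge2f.
Qed.
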